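(* Let $\lambda_1,\lambda_2,\sigma_1,\sigma_2\in\mathbb{C}^*$ and $\eta_1,\eta_2\in\mathbb{C}$. Then $\Omega(\lambda_1,\eta_1,\sigma_1,0)\otimes\Omega(\lambda_2,\eta_2,\sigma_2,0)$ is an irreducible $\mathcal{G}$-module if and only if $\lambda_1\neq\lambda_2$.
   Context: The planar Galilean conformal algebra $\mathcal{G}$ is the complex Lie algebra with basis $\{L_m,H_m,I_m,J_m\mid m\in\mathbb{Z}\}$ and brackets $[L_m,L_n]=(n-m)L_{m+n}$, $[L_m,H_n]=nH_{m+n}$, $[L_m,I_n]=(n-m)I_{m+n}$, $[L_m,J_n]=(n-m)J_{m+n}$, $[H_m,I_n]=I_{m+n}$, $[H_m,J_n]=-J_{m+n}$, and $[H_m,H_n]=[I_m,I_n]=[J_m,J_n]=[I_m,J_n]=0$ for all $m,n\in\mathbb{Z}$. For $\lambda,\sigma\in\mathbb{C}^*$, $\eta\in\mathbb{C}$, the module $\Omega(\lambda,\eta,\sigma,0)$ is $\mathbb{C}[X,Y]$ with $L_m f(X,Y)=\lambda^m(Y-mX+m\eta)f(X,Y-m)$, $H_m f(X,Y)=\lambda^m X f(X,Y-m)$, $I_m f(X,Y)=\lambda^m\sigma f(X-1,Y-m)$, $J_m f(X,Y)=0$. The tensor product of $\mathcal{G}$-modules has action $x(v\otimes w)=xv\otimes w+v\otimes xw$. *)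

From HB Require Import structures.
From mathcomp Require Import all_boot all_order all_algebra.
From mathcomp Require Import reals.
From mathcomp Require Import complex.
From mathcomp Require Import mpoly.
Set Implicit Arguments. Unset Strict Implicit. Unset Printing Implicit Defensive.
Import Order.TTheory GRing.Theory Num.Theory.
Local Open Scope ring_scope.
Local Open Scope complex_scope.

Section GCA.
Variable R : realType.
Local Notation C := (R[i]).
(* The tensor product C[X1,Y1] (x) C[X2,Y2] identified with C[X1,Y1,X2,Y2]:
   variable 0 = X1, 1 = Y1, 2 = X2, 3 = Y2, and f (x) g = f(X1,Y1) g(X2,Y2). *)
Local Notation V := {mpoly C[4]}.

Definition shift (c : 'I_4 -> C) (F : V) : V :=
  comp_mpoly [tuple 'X_i - (c i)%:MP | i < 4] F.

Definition sh4 (a b d e : C) : 'I_4 -> C :=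
  fun i => nth 0 [:: a; b; d; e] i.

(* Action of the planar Galilean conformal algebra on
   Omega(l1,e1,s1,0) (x) Omega(l2,e2,s2,0), x (v (x) w) = x v (x) w + v (x) x w. *)
Definition tL (l1 e1 l2 e2 : C) (m : int) (F : V) : V :=
  (l1 ^ m) *: (('X_1 - m%:~R *: 'X_0 + (m%:~R * e1)%:MP) * shift (sh4 0 m%:~R 0 0) F)
  + (l2 ^ m) *: (('X_3 - m%:~R *: 'X_2 + (m%:~R * e2)%:MP) * shift (sh4 0 0 0 m%:~R) F).

Definition tH (l1 l2 : C) (m : int) (F : V) : V :=
  (l1 ^ m) *: ('X_0 * shift (sh4 0 m%:~R 0 0) F)
  + (l2 ^ m) *: ('X_2 * shift (sh4 0 0 0 m%:~R) F).

Definition tI (l1 s1 l2 s2 : C) (m : int) (F : V) : V :=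
  (l1 ^ m * s1) *: shift (sh4 1 m%:~R 0 0) F
  + (l2 ^ m * s2) *: shift (sh4 0 0 1 m%:~R) F.

Definition tJ (m : int) (F : V) : V := 0.

Definition is_submodule (l1 e1 s1 l2 e2 s2 : C) (S : V -> Prop) : Prop :=
  [/\ S 0,
      (forall u v, S u -> S v -> S (u + v)),
      (forall (c : C) u, S u -> S (c *: u)) &
      (forall (m : int) u, S u ->
         [/\ S (tL l1 e1 l2 e2 m u), S (tH l1 l2 m u),
             S (tI l1 s1 l2 s2 m u) & S (tJ m u)])].

Definition tensor_irreducible (l1 e1 s1 l2 e2 s2 : C) : Prop :=
  (exists v : V, v != 0) /\
  forall S : V -> Prop, is_submodule l1 e1 s1 l2 e2 s2 S ->
    (forall v, S v -> v = 0) \/ (forall v, S v).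

End GCA.

From mathcomp Require Import all_boot all_order all_algebra.
From mathcomp Require Import reals complex mpoly.
From mathcomp Require Import ring.
From Stdlib Require Import Classical.
Set Implicit Arguments. Unset Strict Implicit. Unset Printing Implicit Defensive.
Import Order.TTheory GRing.Theory Num.Theory.
Local Open Scope ring_scope.

(* If l1 = l2, then L_m and H_m shift
   Y1 in one term and Y2 in the other by the same m with the same coefficient,
   so the polynomials depending on Y1, Y2 only through Y1 + Y2 form a
   submodule; it contains 1 but not Y1.

   If l1 <> l2, let S be a nonzero submodule and u in S.  Each of L_m u, H_m u,
   I_m u has the form l1^m f(m) + l2^m g(m) with f, g polynomial in m (with
   coefficients in the module), and an inductive Vandermonde argument puts
   every f(m) and g(m) in S.  From H and L at m = 0 this makes S an ideal; from
   I it makes S stable under the shifts of (X1, Y1) by (1, m) and of (X2, Y2) by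
   (1, m).  The linear coefficient of k |-> u(X - k c) is a directional
   derivative of u, so S is stable under all partial derivatives.
   Differentiating a nonzero element along its leading monomial gives a
   nonzero constant, hence 1 is in S and S is everything. *)

Section PolynomialSequences.
Variables (K : numFieldType) (W : lmodType K).
Implicit Types (a : nat -> W) (f g : nat -> W).

Definition vpoly a N (m : nat) : W := \sum_(k < N) (m%:R : K) ^+ k *: a k.

Definition vpoly_seq N f := exists a, forall m, f m = vpoly a N m.

Definition vpoly_diff a N (j : nat) : W :=
  \sum_(k < N.+1 | (j < k)%N) 'C(k, j)%:R *: a k.

Lemma vpoly_recr a N m : vpoly a N.+1 m = vpoly a N m + (m%:R : K) ^+ N *: a N.
Proof. by rewrite /vpoly big_ord_recr. Qed.

Lemma vpolyD a b N m : vpoly (fun k => a k + b k) N m = vpoly a N m + vpoly b N m.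
Proof. by rewrite /vpoly -big_split; apply: eq_bigr => k _; rewrite scalerDr. Qed.

Lemma vpoly_diffE a N m :
  vpoly a N.+1 m.+1 - vpoly a N.+1 m = vpoly (vpoly_diff a N) N m.
Proof.
rewrite /vpoly /vpoly_diff -sumrB.
have binom (k : 'I_N.+1) : (m.+1%:R : K) ^+ k *: a k - (m%:R : K) ^+ k *: a k
    = \sum_(i < N | (i < k)%N) ((m%:R : K) ^+ i *+ 'C(k, i)) *: a k.
  rewrite -scalerBl mulrS addrC exprD1n big_ord_recr /= binn mulr1n addrK.
  rewrite scaler_suml (big_ord_widen N (fun i => ((m%:R : K) ^+ i *+ 'C(k, i)) *: a k)) //.
  by rewrite -ltnS.
rewrite (eq_bigr _ (fun k _ => binom k)).
under [RHS]eq_bigr => j _ do rewrite scaler_sumr.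
rewrite (exchange_big_dep (fun _ => true)) //=.
by apply: eq_bigr => i _; apply: eq_bigr => k _; rewrite scalerA mulr_natr.
Qed.

Lemma vpoly_diff_last a N : vpoly_diff a N.+1 N = N.+1%:R *: a N.+1.
Proof.
rewrite /vpoly_diff (big_pred1 ord_max) /= ?binSn // => -[k /= lt_k].
by rewrite -val_eqE /= eqn_leq -[(k <= N.+1)%N]ltnS lt_k.
Qed.

Lemma vpoly_seq_ext N f g : f =1 g -> vpoly_seq N f -> vpoly_seq N g.
Proof. by move=> fg [a fa]; exists a => m; rewrite -fg fa. Qed.

Lemma vpoly_seq0 f : vpoly_seq 0 f -> forall m, f m = 0.
Proof. by case=> a fa m; rewrite fa /vpoly big_ord0. Qed.

Lemma vpoly_seq_diff N f : vpoly_seq N.+1 f -> vpoly_seq N (fun m => f m.+1 - f m).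
Proof. by case=> a fa; exists (vpoly_diff a N) => m; rewrite !fa vpoly_diffE. Qed.

Lemma vpoly_seq_widen N f : vpoly_seq N f -> vpoly_seq N.+1 f.
Proof.
case=> a fa; exists (fun k => if k == N then 0 else a k) => m.
rewrite vpoly_recr eqxx scaler0 addr0 fa; apply: eq_bigr => k _.
by rewrite ifN // neq_ltn ltn_ord.
Qed.

Lemma vpoly_seqD N f g :
  vpoly_seq N f -> vpoly_seq N g -> vpoly_seq N (fun m => f m + g m).
Proof. by case=> a fa [b gb]; exists (fun k => a k + b k) => m; rewrite fa gb vpolyD. Qed.

Lemma vpoly_seqZ N (c : K) f : vpoly_seq N f -> vpoly_seq N (fun m => c *: f m).
Proof.
case=> a fa; exists (fun k => c *: a k) => m.
by rewrite fa /vpoly scaler_sumr; apply: eq_bigr => k _; rewrite !scalerA mulrC.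
Qed.

Lemma vpoly_seqB N f g :
  vpoly_seq N f -> vpoly_seq N g -> vpoly_seq N (fun m => f m - g m).
Proof.
move=> vf /(vpoly_seqZ (-1)) vg.
by apply: vpoly_seq_ext (vpoly_seqD vf vg) => m; rewrite scaleN1r.
Qed.

Lemma vpoly_seqZnat N f : vpoly_seq N f -> vpoly_seq N.+1 (fun m => (m%:R : K) *: f m).
Proof.
case=> a fa; exists (fun k => if k is k'.+1 then a k' else 0) => m.
rewrite fa /vpoly big_ord_recl scaler0 add0r scaler_sumr; apply: eq_bigr => k _.
by rewrite scalerA exprS.
Qed.

Lemma vpoly_seq_succ N f : vpoly_seq N f -> vpoly_seq N (fun m => f m.+1).
Proof.
case: N => [|N] vf.
  by exists (fun _ => 0) => m; rewrite (vpoly_seq0 vf) /vpoly big_ord0.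
have [b fb] := vpoly_seq_widen (vpoly_seq_diff vf).
have [a fa] := vf.
by exists (fun k => a k + b k) => m; rewrite vpolyD -fa -fb addrC subrK.
Qed.

Section Subspace.
Variable S : W -> Prop.
Hypotheses (memS0 : S 0) (memSD : forall u v, S u -> S v -> S (u + v))
  (memSZ : forall (c : K) u, S u -> S (c *: u)).

Lemma memSB u v : S u -> S v -> S (u - v).
Proof. by move=> Su Sv; apply: memSD => //; rewrite -scaleN1r; apply: memSZ. Qed.

Lemma memSZV (c : K) u : c != 0 -> S (c *: u) -> S u.
Proof. by move=> c0 /(memSZ c^-1); rewrite scalerA mulVf ?scale1r. Qed.

(* The difference sequence has top coefficient N.+1 a_(N.+1) (vpoly_diff_last),
   so induction reaches the top coefficient; subtracting it lowers the degree. *)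
Lemma vpoly_coef_mem N a :
  (forall m, S (vpoly a N m)) -> forall k, (k < N)%N -> S (a k).
Proof.
elim: N a => [//|N IHN] a Sa.
have SaN : S (a N).
  case: N IHN Sa => [|N] IHN Sa.
    by have := Sa 0%N; rewrite /vpoly big_ord1 expr0 scale1r.
  have Sdiff m : S (vpoly (vpoly_diff a N.+1) N.+1 m).
    by rewrite -vpoly_diffE; apply: memSB.
  have := IHN _ Sdiff N (ltnSn N); rewrite vpoly_diff_last.
  by apply: memSZV; rewrite pnatr_eq0.
have Sinit m : S (vpoly a N m).
  by have := memSB (Sa m) (memSZ ((m%:R : K) ^+ N) SaN); rewrite vpoly_recr addrK.
by move=> k; rewrite ltnS leq_eqVlt => /predU1P [-> //|]; apply: IHN.
Qed.

Section ExponentialSeparation.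
Variables (l1 l2 : K).
Hypotheses (l12 : l1 != l2) (l1n0 : l1 != 0).

(* (l1 - l2) f m = (l1 f (m + 1) - l2 f m) - l1 (f (m + 1) - f m), and the
   difference sequence satisfies the same hypothesis with a lower degree. *)
Lemma vpoly_twisted_diff_mem N f : vpoly_seq N f ->
  (forall m, S (l1 *: f m.+1 - l2 *: f m)) -> forall m, S (f m).
Proof.
elim: N f => [|N IHN] f vf Sf m; first by rewrite (vpoly_seq0 vf).
have Sdiff : forall m, S (f m.+1 - f m).
  apply: IHN (vpoly_seq_diff vf) _ => k.
  by have := memSB (Sf k.+1) (Sf k); congr S; rewrite !scalerBr !opprD !opprK addrACA.
have l12' : l1 - l2 != 0 by rewrite subr_eq0.
apply: (memSZV l12').
have := memSB (Sf m) (memSZ l1 (Sdiff m)); congr S.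
by rewrite scalerBr scalerBl !opprD !opprK addrACA subrr add0r addrC.
Qed.

(* Replacing h m by h (m + 1) - l2 h m, where h m = l1^m f m + l2^m g m,
   lowers the degree of g while keeping f polynomial. *)
Lemma vpoly_exp_sep Ng : forall Nf f g, vpoly_seq Nf f -> vpoly_seq Ng g ->
  (forall m, S (l1 ^+ m *: f m + l2 ^+ m *: g m)) -> forall m, S (f m).
Proof.
elim: Ng => [|Ng IHNg] Nf f g vf vg Sfg m.
  apply: (memSZV (expf_neq0 m l1n0)).
  by have := Sfg m; rewrite (vpoly_seq0 vg) scaler0 addr0.
apply: (vpoly_twisted_diff_mem vf) => {}m.
pose f' k := l1 *: f k.+1 - l2 *: f k.
pose g' k := l2 *: (g k.+1 - g k).
have vf' : vpoly_seq Nf f'.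
  exact/vpoly_seqB/(vpoly_seqZ _ vf)/vpoly_seqZ/vpoly_seq_succ.
have vg' : vpoly_seq Ng g' by exact/vpoly_seqZ/vpoly_seq_diff.
apply: (IHNg _ f' g' vf' vg') => k.
have := memSB (Sfg k.+1) (memSZ l2 (Sfg k)).
congr S; rewrite /f' /g' scalerDr !scalerBr !scalerA !exprS opprD addrACA.
by rewrite !(mulrC l2) !(mulrC l1).
Qed.

End ExponentialSeparation.

Lemma vpoly_exp_sep2 (l1 l2 : K) Nf Ng f g : l1 != l2 -> l1 != 0 -> l2 != 0 ->
  vpoly_seq Nf f -> vpoly_seq Ng g -> (forall m, S (l1 ^+ m *: f m + l2 ^+ m *: g m)) ->
  (forall m, S (f m)) /\ (forall m, S (g m)).
Proof.
move=> l12 l1n0 l2n0 vf vg Sfg; split; first exact: (vpoly_exp_sep l12 l1n0 vf vg Sfg).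
have l21 : l2 != l1 by rewrite eq_sym.
by apply: (vpoly_exp_sep l21 l2n0 vg vf) => m; rewrite addrC.
Qed.

End Subspace.
End PolynomialSequences.

Section AlgebraSequences.
Variables (K : numFieldType) (A : algType K).

Lemma vpoly_seq_mull N (p : A) f : vpoly_seq N f -> vpoly_seq N (fun m => p * f m).
Proof.
case=> a fa; exists (fun k => p * a k) => m.
by rewrite fa /vpoly mulr_sumr; apply: eq_bigr => k _; rewrite scalerAr.
Qed.

Lemma vpoly_seq_affineM N (p q : A) f :
  vpoly_seq N f -> vpoly_seq N.+1 (fun m => (p + (m%:R : K) *: q) * f m).
Proof.
move=> vf; apply: vpoly_seq_ext (vpoly_seqD (vpoly_seq_widen (vpoly_seq_mull p vf))
  (vpoly_seqZnat (vpoly_seq_mull q vf))) => m.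
by rewrite mulrDl scalerAl.
Qed.

End AlgebraSequences.

Lemma mpoly_ind_alg n (K : nzRingType) (P : {mpoly K[n]} -> Prop) :
  (forall c, P c%:MP) -> (forall i, P 'X_i) ->
  (forall p q, P p -> P q -> P (p + q)) -> (forall p q, P p -> P q -> P (p * q)) ->
  forall p, P p.
Proof.
move=> PC PX PD PM; elim/mpolyind => [|c m p _ _ Pp]; first by rewrite -mpolyC0.
apply: (PD) Pp; rewrite -mul_mpolyC mpolyXE_id; apply: (PM) => //.
apply: big_ind => [|u v|i _]; [by rewrite -mpolyC1 | exact: PM |].
by elim: (m i) => [|k IHk]; rewrite ?expr0 -?mpolyC1 // exprS; apply: PM.
Qed.

Section DirectionalDerivative.
Variables (n : nat) (K : comNzRingType) (d : 'I_n -> K).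
Implicit Types (u v : {mpoly K[n]}).

Definition dderiv u : {mpoly K[n]} := \sum_(j < n) d j *: u^`M(j).

Lemma dderivD u v : dderiv (u + v) = dderiv u + dderiv v.
Proof. by rewrite /dderiv -big_split; apply: eq_bigr => j _; rewrite mderivD scalerDr. Qed.

Lemma dderivB u v : dderiv (u - v) = dderiv u - dderiv v.
Proof. by rewrite /dderiv -sumrB; apply: eq_bigr => j _; rewrite mderivB scalerBr. Qed.

Lemma dderivM u v : dderiv (u * v) = dderiv u * v + u * dderiv v.
Proof.
rewrite /dderiv mulr_suml mulr_sumr -big_split; apply: eq_bigr => j _.
by rewrite mderivM scalerDr scalerAl scalerAr.
Qed.

Lemma dderivC c : dderiv c%:MP = 0.
Proof. by rewrite /dderiv big1 // => j _; rewrite mderivC scaler0. Qed.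

Lemma dderivX i : dderiv 'X_i = (d i)%:MP.
Proof.
rewrite /dderiv (bigD1 i) //= big1 ?addr0 => [|j ji].
  rewrite mderivX mnm1E eqxx.
  have -> : (U_(i) - U_(i) = 0)%MM by apply/mnmP => k; rewrite mnmBE subnn mnm0E.
  by rewrite mpolyX0 scale1r -alg_mpolyC.
by rewrite mderivX mnm1E eq_sym (negbTE ji) scale0r scaler0.
Qed.

End DirectionalDerivative.

Lemma mderivm_mlead n (K : numDomainType) (u : {mpoly K[n]}) :
  u != 0 -> exists2 c : K, c != 0 & u^`M[mlead u] = c%:MP.
Proof.
move=> u0; set m := mlead u.
exists (u@_m *+ \prod_(i < n) (m i)^_(m i)).
  rewrite mulrn_eq0 negb_or mleadc_eq0 u0 andbT -lt0n.
  by apply: prodn_gt0 => i; rewrite ffactnn fact_gt0.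
apply/mpolyP => m'; rewrite mcoeff_mderivm mcoeffC.
have [->|m'0] := eqVneq m' 0%MM; first by rewrite addm0 mulr1.
rewrite mulr0 memN_msupp_eq0 ?mul0rn //; apply: msize_mdeg_ge.
by rewrite -mlead_deg // mdegD -addn1 leq_add2l lt0n mdeg_eq0.
Qed.

Section Shift.
Variable R : realType.
Local Notation C := (R[i]).
Local Notation V := {mpoly C[4]}.
Implicit Types (c d : 'I_4 -> C) (u v : V).

Lemma shiftD c u v : shift c (u + v) = shift c u + shift c v.
Proof. exact: comp_mpolyD. Qed.

Lemma shiftB c u v : shift c (u - v) = shift c u - shift c v.
Proof. exact: comp_mpolyB. Qed.

Lemma shiftN c u : shift c (- u) = - shift c u.
Proof. exact: comp_mpolyN. Qed.

Lemma shiftZ c a u : shift c (a *: u) = a *: shift c u.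
Proof. exact: comp_mpolyZ. Qed.

Lemma shiftM c u v : shift c (u * v) = shift c u * shift c v.
Proof. exact: rmorphM. Qed.

Lemma shiftX c i : shift c 'X_i = 'X_i - (c i)%:MP.
Proof. by rewrite /shift comp_mpolyXU -tnth_nth tnth_mktuple. Qed.

Lemma shiftC c a : shift c a%:MP = a%:MP.
Proof. exact: comp_mpolyC. Qed.

Lemma shift_ext c d u : c =1 d -> shift c u = shift d u.
Proof.
move=> cd; rewrite /shift.
have -> : [tuple 'X_i - (c i)%:MP | i < 4] = [tuple 'X_i - (d i)%:MP | i < 4] :> 4.-tuple V.
  by apply: eq_mktuple => i; rewrite cd.
by [].
Qed.

Lemma shift_zero u : shift (fun _ => 0) u = u.
Proof.
rewrite /shift -[RHS]comp_mpoly_id.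
have -> : [tuple 'X_i - (0 : C)%:MP | i < 4] = [tuple 'X_i | i < 4] :> 4.-tuple V.
  by apply: eq_mktuple => i; rewrite rmorph0 subr0.
by [].
Qed.

Lemma shift_comp c d u : shift c (shift d u) = shift (fun i => c i + d i) u.
Proof.
(* Closing with congr2 rather than rewriting with IHu keeps unification from
   unfolding [shift], which is very slow. *)
elim/mpoly_ind_alg: u => [a|i|u v IHu IHv|u v IHu IHv].
- by rewrite [shift d _]shiftC !shiftC.
- by rewrite [shift d _]shiftX shiftB !shiftX shiftC rmorphD opprD addrA.
- rewrite [shift d _]shiftD shiftD [RHS]shiftD; exact: (congr2 +%R IHu IHv).
- rewrite [shift d _]shiftM shiftM [RHS]shiftM; exact: (congr2 *%R IHu IHv).
Qed.

Lemma shift_comm c d u : shift c (shift d u) = shift d (shift c u).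
Proof. by rewrite !shift_comp; apply: shift_ext => i; rewrite addrC. Qed.

Lemma sh4_affine (a b c d a' b' c' d' x : C) (i : 'I_4) :
  sh4 a b c d i + x * sh4 a' b' c' d' i =
  sh4 (a + x * a') (b + x * b') (c + x * c') (d + x * d') i.
Proof. by case: i => -[|[|[|[|k]]]] hk. Qed.

Lemma shift_sh4_zero u : shift (sh4 0 0 0 0) u = u.
Proof. by rewrite -[RHS]shift_zero; apply: shift_ext => -[[|[|[|[|k]]]] hk]. Qed.

(* u(X - c - t d) as a polynomial in t; see horner_shift_poly. *)
Definition shift_poly c d : V -> {poly V} :=
  mmap (polyC \o @mpolyC 4 C) (fun i => ('X_i - (c i)%:MP)%:P - (d i)%:MP *: 'X).

Lemma shift_polyD c d u v :
  shift_poly c d (u + v) = shift_poly c d u + shift_poly c d v.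
Proof. exact: mmapD. Qed.

Lemma shift_polyM c d u v :
  shift_poly c d (u * v) = shift_poly c d u * shift_poly c d v.
Proof. exact: (mmap_is_multiplicative _ _).1. Qed.

Lemma shift_polyC c d a : shift_poly c d a%:MP = (a%:MP)%:P.
Proof. exact: mmapC. Qed.

Lemma shift_polyX c d i : shift_poly c d 'X_i = ('X_i - (c i)%:MP)%:P - (d i)%:MP *: 'X.
Proof. by rewrite /shift_poly mmapX mmap1U. Qed.

Lemma horner_shift_poly c d u x :
  (shift_poly c d u).[x%:MP] = shift (fun i => c i + x * d i) u.
Proof.
elim/mpoly_ind_alg: u => [a|i|u v IHu IHv|u v IHu IHv].
- by rewrite shift_polyC hornerC shiftC.
- rewrite shift_polyX shiftX hornerD hornerN hornerC hornerZ hornerX.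
  by rewrite rmorphD opprD addrA -rmorphM mulrC.
- rewrite shift_polyD shiftD hornerD; exact: (congr2 +%R IHu IHv).
- rewrite shift_polyM shiftM hornerM; exact: (congr2 *%R IHu IHv).
Qed.

Lemma shift_poly_coef01 c d u :
  (shift_poly c d u)`_0 = shift c u /\ (shift_poly c d u)`_1 = - dderiv d (shift c u).
Proof.
elim/mpoly_ind_alg: u => [a|i|u v [u0 u1] [v0 v1]|u v [u0 u1] [v0 v1]].
- by rewrite shift_polyC shiftC dderivC !coefC oppr0.
- rewrite shift_polyX shiftX !coefB !coefC !coefZ !coefX /= mulr0 mulr1 subr0 sub0r.
  by rewrite dderivB dderivX dderivC subr0.
- rewrite shift_polyD shiftD dderivD !coefD opprD.
  by split; [exact: (congr2 +%R u0 v0) | exact: (congr2 +%R u1 v1)].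
rewrite shift_polyM shiftM dderivM.
(* Generalizing first keeps rewriting from unfolding [shift_poly], which is slow. *)
move: (shift_poly c d u) (shift_poly c d v) u0 u1 v0 v1 => p q p0 p1 q0 q1.
rewrite !coefM big_ord1 big_ord_recr big_ord1 /= p0 q0 p1 q1.
by rewrite mulrN mulNr -opprD addrC.
Qed.

End Shift.

Section TensorModule.
Variable R : realType.
Local Notation C := (R[i]).
Local Notation V := {mpoly C[4]}.

Lemma ord4_ind (P : 'I_4 -> Prop) : P 0 -> P 1 -> P 2 -> P 3 -> forall i, P i.
Proof.
move=> P0 P1 P2 P3 [[|[|[|[|k]]]] lt_i4] //.
- by rewrite (_ : Ordinal _ = 0) //; apply: val_inj.
- by rewrite (_ : Ordinal _ = 1) //; apply: val_inj.
- by rewrite (_ : Ordinal _ = 2) //; apply: val_inj.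
- by rewrite (_ : Ordinal _ = 3) //; apply: val_inj.
Qed.

Lemma sh4E (a b c d : C) :
  [/\ sh4 a b c d 0 = a, sh4 a b c d 1 = b, sh4 a b c d 2 = c & sh4 a b c d 3 = d].
Proof. by []. Qed.

Lemma big_ord4 (W : nmodType) (F : 'I_4 -> W) :
  \sum_(i < 4) F i = F 0 + F 1 + F 2 + F 3.
Proof.
rewrite !big_ord_recl big_ord0 addr0 !addrA.
by congr (F _ + F _ + F _ + F _); apply: val_inj.
Qed.

Lemma dderiv_sh4 (a b c d : C) (u : V) :
  dderiv (sh4 a b c d) u = a *: u^`M(0) + b *: u^`M(1) + c *: u^`M(2) + d *: u^`M(3).
Proof.
by rewrite /dderiv big_ord4; have [-> -> -> ->] := sh4E a b c d.
Qed.

Lemma horner_vpoly (p : {poly V}) N m :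
  (size p <= N)%N -> p.[(m%:R : C)%:MP] = vpoly (fun k => p`_k) N m.
Proof.
move=> le_pN; rewrite (horner_coef_wide _ le_pN); apply: eq_bigr => k _.
by rewrite -rmorphXn mulrC mul_mpolyC.
Qed.

Lemma vpoly_seq_shift (c d : 'I_4 -> C) (u : V) :
  vpoly_seq (size (shift_poly c d u)) (fun m => shift (fun i => c i + m%:R * d i) u).
Proof.
exists (fun k => (shift_poly c d u)`_k) => m.
by rewrite -horner_shift_poly (horner_vpoly _ (leqnn _)).
Qed.

Lemma vpoly_seq_shiftY1 (a : C) (u : V) :
  exists N, vpoly_seq N (fun m => shift (sh4 a m%:R 0 0) u).
Proof.
eexists; apply: vpoly_seq_ext (vpoly_seq_shift (sh4 a 0 0 0) (sh4 0 1 0 0) u) => m.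
by apply: shift_ext => i; rewrite sh4_affine !mulr0 mulr1 !addr0 add0r.
Qed.

Lemma vpoly_seq_shiftY2 (a : C) (u : V) :
  exists N, vpoly_seq N (fun m => shift (sh4 0 0 a m%:R) u).
Proof.
eexists; apply: vpoly_seq_ext (vpoly_seq_shift (sh4 0 0 a 0) (sh4 0 0 0 1) u) => m.
by apply: shift_ext => i; rewrite sh4_affine !mulr0 mulr1 !addr0 add0r.
Qed.

Section Irreducible.
Variables (l1 l2 s1 s2 e1 e2 : C).
Hypotheses (l1n0 : l1 != 0) (l2n0 : l2 != 0) (s1n0 : s1 != 0) (s2n0 : s2 != 0)
  (l12 : l1 != l2).
Variable S : V -> Prop.
Hypothesis subS : is_submodule l1 e1 s1 l2 e2 s2 S.

Let memS0 : S 0. Proof. by case: subS. Qed.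
Let memSD u v : S u -> S v -> S (u + v). Proof. by case: subS => _ SD _ _; apply: SD. Qed.
Let memSZ a u : S u -> S (a *: u). Proof. by case: subS => _ _ SZ _; apply: SZ. Qed.
Let memL m u : S u -> S (tL l1 e1 l2 e2 m u).
Proof. by case: subS => _ _ _ Sop /(Sop m) []. Qed.
Let memH m u : S u -> S (tH l1 l2 m u).
Proof. by case: subS => _ _ _ Sop /(Sop m) []. Qed.
Let memI m u : S u -> S (tI l1 s1 l2 s2 m u).
Proof. by case: subS => _ _ _ Sop /(Sop m) []. Qed.

Lemma shift_mem u : S u -> forall m : nat,
  S (shift (sh4 1 m%:R 0 0) u) /\ S (shift (sh4 0 0 1 m%:R) u).
Proof.
move=> Su; have [N1 v1] := vpoly_seq_shiftY1 1 u; have [N2 v2] := vpoly_seq_shiftY2 1 u.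
have Sfg (m : nat) : S (l1 ^+ m *: (s1 *: shift (sh4 1 m%:R 0 0) u)
                        + l2 ^+ m *: (s2 *: shift (sh4 0 0 1 m%:R) u)).
  by rewrite !scalerA; exact: (memI m%:Z Su).
have [S1 S2] := vpoly_exp_sep2 memS0 memSD memSZ l12 l1n0 l2n0
  (vpoly_seqZ s1 v1) (vpoly_seqZ s2 v2) Sfg.
move=> m; split.
- exact: (memSZV memSZ s1n0 (S1 m)).
- exact: (memSZV memSZ s2n0 (S2 m)).
Qed.

Lemma mulX02_mem u : S u -> S ('X_0 * u) /\ S ('X_2 * u).
Proof.
move=> Su; have [N1 v1] := vpoly_seq_shiftY1 0 u; have [N2 v2] := vpoly_seq_shiftY2 0 u.
have [S1 S2] := vpoly_exp_sep2 memS0 memSD memSZ l12 l1n0 l2n0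
  (vpoly_seq_mull 'X_0 v1) (vpoly_seq_mull 'X_2 v2) (fun m => memH m%:Z Su).
by split; [move: (S1 0%N) | move: (S2 0%N)]; rewrite mulr0n shift_sh4_zero.
Qed.

Lemma mulX13_mem u : S u -> S ('X_1 * u) /\ S ('X_3 * u).
Proof.
move=> Su; have [N1 v1] := vpoly_seq_shiftY1 0 u; have [N2 v2] := vpoly_seq_shiftY2 0 u.
have coefL (i j : 'I_4) (e : C) (m : nat) :
    'X_j - (m%:R : C) *: 'X_i + ((m%:R : C) * e)%:MP = 'X_j + (m%:R : C) *: (e%:MP - 'X_i).
  by rewrite rmorphM mul_mpolyC scalerBr addrA addrAC.
have Sfg (m : nat) :
    S (l1 ^+ m *: (('X_1 + (m%:R : C) *: (e1%:MP - 'X_0)) * shift (sh4 0 m%:R 0 0) u)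
     + l2 ^+ m *: (('X_3 + (m%:R : C) *: (e2%:MP - 'X_2)) * shift (sh4 0 0 0 m%:R) u)).
  by rewrite -!coefL; exact: (memL m%:Z Su).
have [S1 S2] := vpoly_exp_sep2 memS0 memSD memSZ l12 l1n0 l2n0
  (vpoly_seq_affineM 'X_1 (e1%:MP - 'X_0) v1)
  (vpoly_seq_affineM 'X_3 (e2%:MP - 'X_2) v2) Sfg.
by split; [move: (S1 0%N) | move: (S2 0%N)]; rewrite mulr0n scale0r addr0 shift_sh4_zero.
Qed.

Lemma mulX_mem i u : S u -> S ('X_i * u).
Proof.
move=> Su; elim/ord4_ind: i.
- exact: (mulX02_mem Su).1.
- exact: (mulX13_mem Su).1.
- exact: (mulX02_mem Su).2.
- exact: (mulX13_mem Su).2.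
Qed.

Lemma mul_mem q u : S u -> S (q * u).
Proof.
elim/mpoly_ind_alg: q u => [a|i|p q Sp Sq|p q Sp Sq] u Su.
- by rewrite mul_mpolyC; apply: memSZ.
- exact: mulX_mem.
- by rewrite mulrDl; apply: memSD; [apply: Sp | apply: Sq].
- by rewrite -mulrA; apply/Sp/Sq.
Qed.

Lemma poly_coef_mem (p : {poly V}) :
  (forall m : nat, S p.[(m%:R : C)%:MP]) -> forall k, S p`_k.
Proof.
move=> Sp k; have le_pN := leq_maxl (size p) k.+1.
apply: (vpoly_coef_mem memSD memSZ (N := maxn (size p) k.+1)); last exact: leq_maxr.
by move=> m; rewrite -horner_vpoly.
Qed.

(* The shift of u by m c is polynomial in m with linear coefficient
   - dderiv c u. *)
Lemma dderiv_mem c u : (forall v, S v -> S (shift c v)) -> S u -> S (dderiv c u).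
Proof.
move=> Sc Su.
have Siter (m : nat) : S (shift (fun i => 0 + m%:R * c i) u).
  elim: m => [|m IHm].
    by rewrite (@shift_ext _ _ (fun _ => 0)) ?shift_zero // => i; rewrite mul0r addr0.
  suff -> : shift (fun i => 0 + m.+1%:R * c i) u =
            shift c (shift (fun i => 0 + m%:R * c i) u) by exact: Sc.
  by rewrite shift_comp; apply: shift_ext => i; rewrite !add0r mulrSr mulrDl mul1r addrC.
have := poly_coef_mem (p := shift_poly (fun _ => 0) c u) _ 1.
rewrite (shift_poly_coef01 _ _ u).2 shift_zero => /(_ _)/(memSZ (-1)).
by rewrite scaleN1r opprK; apply => m; rewrite horner_shift_poly.
Qed.

Lemma mderiv_mem i u : S u -> S u^`M(i).
Proof.
move=> Su.
have D (a b c d : C) : (forall v, S v -> S (shift (sh4 a b c d) v)) ->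
    S (a *: u^`M(0) + b *: u^`M(1) + c *: u^`M(2) + d *: u^`M(3)).
  by move=> Sc; rewrite -dderiv_sh4; apply: dderiv_mem.
have := D 1 0 0 0 (fun v Sv => (shift_mem Sv 0).1).
have := D 1 1 0 0 (fun v Sv => (shift_mem Sv 1).1).
have := D 0 0 1 0 (fun v Sv => (shift_mem Sv 0).2).
have := D 0 0 1 1 (fun v Sv => (shift_mem Sv 1).2).
rewrite !scale1r !scale0r !addr0 !add0r => D23 D2 D01 D0.
elim/ord4_ind: i => //.
- by have := memSB memSD memSZ D01 D0; rewrite addrAC subrr add0r.
- by have := memSB memSD memSZ D23 D2; rewrite addrAC subrr add0r.
Qed.

Lemma mderivm_mem m u : S u -> S u^`M[m].
Proof.
move=> Su; rewrite /mderivm; elim: (enum 'I_4) => //= i s IHs.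
by elim: (m i) => //= k IHk; apply: mderiv_mem.
Qed.

Lemma submodule_full : (exists2 v, S v & v != 0) -> forall w, S w.
Proof.
case=> v Sv v0; have [a a0 Dv] := mderivm_mlead v0.
have S1 : S 1.
  by apply: (memSZV memSZ a0); rewrite alg_mpolyC -Dv; apply: mderivm_mem.
by move=> w; rewrite -[w]mulr1; apply: mul_mem.
Qed.

End Irreducible.
End TensorModule.

Section Reducible.
Variable R : realType.
Local Notation C := (R[i]).
Local Notation V := {mpoly C[4]}.

(* The polynomials in X1, X2 and Y1 + Y2. *)
Definition diag_invariant (u : V) := forall t : C, shift (sh4 0 t 0 (- t)) u = u.

Lemma diag_invariant_shift c u : diag_invariant u -> diag_invariant (shift c u).
Proof. by move=> invu t; rewrite shift_comm invu. Qed.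

Lemma diag_invariant_shiftY u (t : C) :
  diag_invariant u -> shift (sh4 0 t 0 0) u = shift (sh4 0 0 0 t) u.
Proof.
move=> invu; rewrite -{1}(invu (- t)) shift_comp; apply: shift_ext.
by elim/ord4_ind; rewrite /= ?addr0 ?add0r ?subrr ?opprK.
Qed.

Lemma diag_invariantD u v :
  diag_invariant u -> diag_invariant v -> diag_invariant (u + v).
Proof. by move=> invu invv t; rewrite shiftD invu invv. Qed.

Lemma diag_invariantZ a u : diag_invariant u -> diag_invariant (a *: u).
Proof. by move=> invu t; rewrite shiftZ invu. Qed.

(* With equal parameters the two tensor factors pick up the same Y-shift, so
   L_m and H_m act through the single product (A1 + A2) * shift u. *)
Lemma diag_invariant_merge (a m : C) (A1 A2 u : V) :
  diag_invariant u -> diag_invariant (A1 + A2) ->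
  diag_invariant (a *: (A1 * shift (sh4 0 m 0 0) u) + a *: (A2 * shift (sh4 0 0 0 m) u)).
Proof.
move=> invu invA t.
rewrite diag_invariant_shiftY // -scalerDr -mulrDl shiftZ shiftM (invA t).
move: (diag_invariant_shift (sh4 0 0 0 m) invu).
by move: (shift (sh4 0 0 0 m) u) => G invG; rewrite (invG t).
Qed.

Lemma diag_invariant_submodule l e1 e2 s1 s2 : is_submodule l e1 s1 l e2 s2 diag_invariant.
Proof.
split=> [t|u v|a u|m u invu]; first exact: comp_mpoly0.
- exact: diag_invariantD.
- exact: diag_invariantZ.
split.
- apply: diag_invariant_merge invu _ => t.
  rewrite !shiftD !shiftN !shiftZ !shiftX !shiftC.
  have [-> -> -> ->] := sh4E 0 t 0 (- t).
  have cancel (x1 x3 a c b d T : V) :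
      x1 - T - a + b + (x3 + T - c + d) = x1 - a + b + (x3 - c + d).
    by ring.
  rewrite rmorph0 rmorphN !subr0 opprK cancel.
  reflexivity.
- apply: diag_invariant_merge invu _ => t.
  rewrite shiftD !shiftX; have [-> _ -> _] := sh4E 0 t 0 (- t).
  by rewrite rmorph0 !subr0.
- by apply: diag_invariantD; apply: diag_invariantZ; apply: diag_invariant_shift.
- by move=> t; apply: comp_mpoly0.
Qed.

Lemma diag_invariant1 : diag_invariant 1.
Proof. by move=> t; apply: comp_mpoly1. Qed.

Lemma diag_invariantNX1 : ~ diag_invariant 'X_1.
Proof.
move=> /(_ 1) /eqP; rewrite shiftX (_ : sh4 0 1 0 (- 1) 1 = 1) // rmorph1.
by rewrite subr_eq addrC -subr_eq subrr eq_sym oner_eq0.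
Qed.

End Reducible.

Theorem theorem4p5 (R : realType) (l1 l2 s1 s2 e1 e2 : R[i]) :
  l1 != 0 -> l2 != 0 -> s1 != 0 -> s2 != 0 ->
  tensor_irreducible l1 e1 s1 l2 e2 s2 <-> l1 != l2.
Proof.
move=> l1n0 l2n0 s1n0 s2n0; split=> [[_ irr] | l12].
  apply/negP => /eqP l12; subst l2.
  have [zero|full] := irr _ (diag_invariant_submodule l1 e1 e2 s1 s2).
    by have /eqP := zero 1 (@diag_invariant1 R); rewrite oner_eq0.
  exact: diag_invariantNX1 (full 'X_1).
split; first by exists 1; rewrite oner_eq0.
move=> S subS; have [nonzero|zero] := classic (exists2 v, S v & v != 0).
  by right; exact: (submodule_full l1n0 l2n0 s1n0 s2n0 l12 subS nonzero).
left=> v Sv; have [//|v0] := eqVneq v 0.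
by case: zero; exists v.
Qed.
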